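(* Suppose that $k \mid n$, and that $J$ is a $k$-system on $n$ vertices with $$\delta(J) \geq \left(n, (k-1)n/k, (k-2)n/k, \dots, n/k \right).$$ Then $J_k$ admits a fractional perfect matching.
   Context: A $k$-system is a hypergraph $J$ (identified with its edge set) with every edge of size at most $k$ and $\emptyset\in J$; $J_r$ is the $r$-graph of edges of size $r$. The degree $d(e)$ of an edge $e$ is the number of edges of size $|e|+1$ containing $e$; $\delta_r(J)$ is the minimum of $d(e)$ over edges of size $r$; $\delta(J)=(\delta_0(J),\dots,\delta_{k-1}(J))$, compared pointwise. A fractional perfect matching in a hypergraph $H$ is an assignment of weights $w_e\ge 0$ to the edges of $H$ such that for every vertex $v$, $\sum_{e\ni v} w_e=1$. *)

From mathcomp Require Import all_boot all_order all_algebra.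
Set Implicit Arguments. Unset Strict Implicit. Unset Printing Implicit Defensive.
Import Order.TTheory GRing.Theory Num.Theory.

(* A hypergraph on vertex set 'I_n is identified with its edge set
   J : {set {set 'I_n}}. *)

Definition k_system (n k : nat) (J : {set {set 'I_n}}) : Prop :=
  set0 \in J /\ (forall e, e \in J -> #|e| <= k).

Definition layer (n r : nat) (J : {set {set 'I_n}}) : {set {set 'I_n}} :=
  [set e in J | #|e| == r].

Definition deg (n : nat) (J : {set {set 'I_n}}) (e : {set 'I_n}) : nat :=
  #|[set f in J | (e \subset f) && (#|f| == #|e|.+1)]|.

(* delta(J) >= (n, (k-1)n/k, ..., n/k): for each r < k, every edge of size r
   has degree at least (k - r) n / k  (i.e. delta_r(J) >= (k-r)n/k, the minimum
   being taken over edges of size r). *)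
Definition min_degree_cond (n k : nat) (J : {set {set 'I_n}}) : Prop :=
  forall e, e \in J -> #|e| < k -> (k - #|e|) * n %/ k <= deg J e.

Definition fractional_perfect_matching (R : numDomainType) (n : nat)
    (H : {set {set 'I_n}}) (w : {set 'I_n} -> R) : Prop :=
  (forall e, e \in H -> 0 <= w e)%R /\
  (forall v : 'I_n, \sum_(e in H | v \in e) w e = 1)%R.

From mathcomp Require Import all_boot all_order all_algebra.
From mathcomp Require Import ring lra zify.

(* By Farkas' lemma, J_k has no fractional perfect matching iff some vertex
   weighting y is nonnegative on every k-edge but has negative total weight.
   No such y exists.  Sort the weights and let m = n/k and t_r be the
   (r m)-th smallest weight.  Starting from the empty edge, the degree
   condition offers at least n - r m ways to extend an r-edge, so one of them
   adds a vertex of weight at most t_r; this builds a k-edge of weight at most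
   t_0 + ... + t_(k-1).  Since t_r is the least of the r-th block of m sorted
   weights, m times this sum is at most the total weight. *)
Set Implicit Arguments. Unset Strict Implicit. Unset Printing Implicit Defensive.
Import Order.TTheory GRing.Theory Num.Theory.

Local Open Scope ring_scope.

Section Farkas.

Variables (R : realFieldType) (T : finType).

Definition dot (y v : T -> R) : R := \sum_j y j * v j.

Lemma dotBr y u v s : dot y (fun j => u j - s * v j) = dot y u - s * dot y v.
Proof. by rewrite /dot mulr_sumr -sumrB; apply: eq_bigr => j _; ring. Qed.

Lemma dotBl z y v s : dot (fun j => z j - s * y j) v = dot z v - s * dot y v.
Proof. by rewrite /dot mulr_sumr -sumrB; apply: eq_bigr => j _; ring. Qed.

Definition in_cone (I : finType) (A : I -> T -> R) (b : T -> R) : Prop :=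
  exists2 lam : I -> R, (forall i, 0 <= lam i) &
    forall j, b j = \sum_i lam i * A i j.

Definition separates (I : finType) (A : I -> T -> R) (b y : T -> R) : Prop :=
  (forall i, 0 <= dot y (A i)) /\ dot y b < 0.

Lemma farkas_ord0 (A : 'I_0 -> T -> R) b : in_cone A b \/ exists y, separates A b y.
Proof.
have [b0|] := boolP [forall j, b j == 0].
  by left; exists (fun _ => 0) => // j; rewrite big_ord0; apply/eqP/(forallP b0).
rewrite negb_forall => /existsP [j0 bj0]; right.
exists (fun j => if j == j0 then - b j0 else 0); split => [[]//|].
rewrite /dot (bigD1 j0) //= eqxx big1 => [|j /negbTE ->]; last by rewrite mul0r.
by rewrite addr0 mulNr oppr_lt0 -expr2 lt_def sqrf_eq0 bj0 sqr_ge0.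
Qed.

Lemma in_cone_cons p (A : 'I_p.+1 -> T -> R) b b' l0 :
  0 <= l0 -> (forall j, b j = l0 * A ord0 j + b' j) ->
  in_cone (fun i => A (lift ord0 i)) b' -> in_cone A b.
Proof.
move=> l0_ge0 bE [lam lam_ge0 b'E].
exists (fun i => if unlift ord0 i is Some i' then lam i' else l0).
  by move=> i; case: (unlift ord0 i).
by move=> j; rewrite big_ord_recl /= unlift_none bE b'E; congr (_ + _);
  apply: eq_bigr => i _; rewrite liftK.
Qed.

Section Projection.

Variables (y a : T -> R).

Definition proj (v : T -> R) j := v j - dot y v / dot y a * a j.

Definition coproj (z : T -> R) j := z j - dot z a / dot y a * y j.

Lemma dot_proj z v : dot z (proj v) = dot (coproj z) v.
Proof. by rewrite /proj /coproj dotBr dotBl; ring. Qed.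

Lemma dot_coproj_eq0 z : dot y a != 0 -> dot (coproj z) a = 0.
Proof. by move=> ya_neq0; rewrite /coproj dotBl divfK ?subrr. Qed.

End Projection.

Section Elimination.

Variables (p : nat) (A : 'I_p.+1 -> T -> R) (b y : T -> R).

Let A' i := A (lift ord0 i).

Lemma separates_coproj z :
  dot y (A ord0) != 0 ->
  separates (fun i => proj y (A ord0) (A' i)) (proj y (A ord0) b) z ->
  separates A b (coproj y (A ord0) z).
Proof.
move=> ya_neq0 [zA zb]; split; last by rewrite -dot_proj.
move=> i; case: (unliftP ord0 i) => [i' ->|->]; first by rewrite -dot_proj; apply: zA.
by rewrite dot_coproj_eq0.
Qed.

Lemma in_cone_proj :
  dot y (A ord0) < 0 -> dot y b < 0 -> (forall i, 0 <= dot y (A' i)) ->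
  in_cone (fun i => proj y (A ord0) (A' i)) (proj y (A ord0) b) ->
  in_cone A b.
Proof.
set c := dot y (A ord0) => c_lt0 yb_lt0 yA'_ge0 [mu mu_ge0 muE].
pose S := \sum_i mu i * dot y (A' i).
have S_ge0 : 0 <= S by apply: sumr_ge0 => i _; rewrite mulr_ge0.
apply: (in_cone_cons (l0 := (dot y b - S) / c)
                     (b' := fun j => \sum_i mu i * A' i j)); last by exists mu.
  by rewrite nmulr_lge0 ?invr_lt0 //; lra.
move=> j; move: (muE j); rewrite /proj -/c.
have -> : \sum_i mu i * (A' i j - dot y (A' i) / c * A ord0 j)
          = \sum_i mu i * A' i j - S / c * A ord0 j.
  by rewrite /S !mulr_suml -sumrB; apply: eq_bigr => i _; ring.
move=> bE; rewrite -(subrK (dot y b / c * A ord0 j) (b j)) bE; ring.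
Qed.

End Elimination.

(* Induction on the number of vectors: a separator y of the other vectors
   either separates A ord0 too, or every vector can be projected along A ord0
   onto the hyperplane orthogonal to y, leaving one vector fewer. *)
Lemma farkas_ord p (A : 'I_p -> T -> R) b :
  in_cone A b \/ exists y, separates A b y.
Proof.
elim: p A b => [|p IH] A b; first exact: farkas_ord0.
have [cone|[y [yA' yb]]] := IH (fun i => A (lift ord0 i)) b.
  by left; apply: (in_cone_cons (l0 := 0) _ _ cone) => // j; rewrite mul0r add0r.
have [ya_ge0|ya_lt0] := leP 0 (dot y (A ord0)).
  right; exists y; split => // i.
  by case: (unliftP ord0 i) => [i' ->|->].
have [cone|[z sep]] := IH (fun i => proj y (A ord0) (A (lift ord0 i)))
                         (proj y (A ord0) b).
  by left; apply: (in_cone_proj ya_lt0 yb yA' cone).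
by right; exists (coproj y (A ord0) z); apply: separates_coproj; rewrite ?ltr0_neq0.
Qed.

Theorem farkas (I : finType) (A : I -> T -> R) b :
  in_cone A b \/ exists y, separates A b y.
Proof.
have [[lam lam_ge0 bE]|[y [yA yb]]] :=
  farkas_ord (fun o : 'I_#|I| => A (enum_val o)) b.
  left; exists (fun i => lam (enum_rank i)) => // j.
  rewrite bE (reindex _ (onW_bij _ (enum_rank_bij I))).
  by apply: eq_bigr => i _; rewrite enum_rankK.
by right; exists y; split => // i; rewrite -(enum_rankK i).
Qed.

End Farkas.

Lemma sum_sorted_block_heads (R : realDomainType) (s : seq R) k m :
  sorted <=%O s -> (k * m <= size s)%N ->
  (\sum_(q < k) nth 0 s (q * m)) *+ m <= \sum_(0 <= i < k * m) nth 0 s i.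
Proof.
move=> s_sorted; elim: k => [|k IH] km_le; first by rewrite big_ord0 mul0rn big_geq.
rewrite big_ord_recr /= mulrnDl (big_cat_nat _ (n := k * m)) //=; last by lia.
apply: lerD; first by apply: IH; lia.
have -> : nth 0 s (k * m) *+ m = \sum_(k * m <= i < k.+1 * m) nth 0 s (k * m).
  by rewrite sumr_const_nat mulSn addnK.
apply: ler_sum_nat => i /andP [i_ge i_lt].
apply: le_sorted_leq_nth => //; rewrite ?inE ?leEnat /=.
all: by move: km_le i_lt; rewrite mulSn; lia.
Qed.

Section SortedValues.

Variables (R : realDomainType) (T : finType) (y : T -> R).

Definition sorted_values : seq R := sort <=%O [seq y v | v <- enum T].

Lemma sorted_values_sorted : sorted <=%O sorted_values.
Proof. exact/sort_sorted/le_total. Qed.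

Lemma perm_sorted_values : perm_eq sorted_values [seq y v | v <- enum T].
Proof. by rewrite perm_sort. Qed.

Lemma size_sorted_values : size sorted_values = #|T|.
Proof. by rewrite size_sort size_map cardE. Qed.

Lemma sum_sorted_values : \sum_(0 <= i < #|T|) nth 0 sorted_values i = \sum_v y v.
Proof.
rewrite -big_enum -(big_map y predT id) -(perm_big _ perm_sorted_values).
by rewrite [RHS](big_nth 0) size_sorted_values.
Qed.

Lemma count_le_sorted_values x :
  count (<= x)%O sorted_values = #|[pred v | y v <= x]|.
Proof.
rewrite (permP perm_sorted_values) count_map cardE /enum_mem size_filter.
by rewrite count_filter; apply: eq_count => v; rewrite !inE andbT.
Qed.

Lemma exists_le_nth_sorted_values i (X : {set T}) :
  (i < #|T|)%N -> (#|T| - i <= #|X|)%N ->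
  exists2 u, u \in X & y u <= nth 0 sorted_values i.
Proof.
set t := nth 0 sorted_values i => i_lt X_ge.
apply/exists_inP; apply: contraTT isT => /exists_inPn X_gt.
have count_le : (count (<= t)%O sorted_values <= i)%N.
  have : (#|[pred v | (y v <= t)%R]| <= #|~: X|)%N.
    apply/subset_leq_card/subsetP => v /= le_v; rewrite inE.
    by apply: contraL le_v => /X_gt; rewrite -ltNge.
  by rewrite count_le_sorted_values; have := cardsC X; lia.
have := nth_count_gt (x := t) (i := i) 0 sorted_values_sorted.
by rewrite count_le size_sorted_values i_lt ltxx => /(_ isT).
Qed.

End SortedValues.

Lemma deg_le_card_extensions n (J : {set {set 'I_n}}) e :
  (deg J e <= #|[set u | u \notin e & u |: e \in J]|)%N.
Proof.
apply: leq_trans (leq_imset_card (fun u => u |: e) _).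
apply/subset_leq_card/subsetP => f; rewrite inE => /andP [fJ /andP [ef /eqP f_card]].
have : (0 < #|f :\: e|)%N by rewrite cardsD (setIidPr ef) f_card subSnn.
rewrite card_gt0 => /set0Pn [u]; rewrite inE => /andP [ue uf].
have fE : u |: e = f.
  by apply/eqP; rewrite eqEcard subUset sub1set uf ef f_card cardsU1 ue /=.
by apply/imsetP; exists u; rewrite // inE ue fE fJ.
Qed.

Section GreedyEdge.

Variables (R : realDomainType) (n k : nat) (J : {set {set 'I_n}}) (y : 'I_n -> R).
Hypotheses (n_gt0 : (0 < n)%N) (k_dvd_n : (k %| n)%N) (J0 : set0 \in J)
  (J_deg : min_degree_cond k J).

Let m := (n %/ k)%N.

Lemma greedy_edge r : (r <= k)%N ->
  exists2 e, e \in J & (#|e| == r) &&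
    (\sum_(v in e) y v <= \sum_(q < r) nth 0 (sorted_values y) (q * m)).
Proof.
have n_eq : n = (k * m)%N by rewrite mulnC divnK.
have /andP [k_gt0 m_gt0] : (0 < k)%N && (0 < m)%N by rewrite -muln_gt0 -n_eq.
elim: r => [|r IH] r_lt.
  by exists set0 => //; rewrite cards0 big_set0 big_ord0 lexx.
have [e eJ /andP [/eqP e_card e_sum]] := IH (ltnW r_lt).
have X_ge : (#|'I_n| - r * m <= #|[set u | u \notin e & u |: e \in J]|)%N.
  apply: leq_trans (deg_le_card_extensions J e).
  have deg_bound : ((k - r) * n %/ k)%N = (n - r * m)%N.
    by rewrite [in LHS]n_eq mulnCA mulKn // mulnBl -n_eq.
  by have := J_deg eJ; rewrite e_card r_lt card_ord -deg_bound => /(_ isT).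
have rm_lt : (r * m < #|'I_n|)%N by rewrite card_ord n_eq ltn_mul2r m_gt0.
have [u] := exists_le_nth_sorted_values y rm_lt X_ge.
rewrite inE => /andP [ue ueJ] u_le.
exists (u |: e) => //; rewrite cardsU1 ue e_card eqxx big_setU1 //= big_ord_recr /=.
by rewrite addrC lerD.
Qed.

End GreedyEdge.

Lemma sum_ge0_of_edge_sums_ge0 (R : realDomainType) n k (J : {set {set 'I_n}})
    (y : 'I_n -> R) :
  (k %| n)%N -> set0 \in J -> min_degree_cond k J ->
  (forall e, e \in layer k J -> 0 <= \sum_(v in e) y v) -> 0 <= \sum_v y v.
Proof.
move=> k_dvd_n J0 J_deg edge_ge0.
have [n0|n_gt0] := posnP n.
  by rewrite big1 // => v; move: (ltn_ord v); rewrite [in X in (_ < X)%N]n0.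
have n_eq : n = (k * (n %/ k))%N by rewrite mulnC divnK.
have [e eJ /andP [/eqP e_card e_sum]] := greedy_edge y n_gt0 k_dvd_n J0 J_deg (leqnn k).
have e_ge0 : 0 <= \sum_(v in e) y v by apply: edge_ge0; rewrite inE eJ e_card eqxx.
rewrite -sum_sorted_values.
have -> : #|'I_n| = (k * (n %/ k))%N by rewrite card_ord -n_eq.
apply: le_trans (sum_sorted_block_heads _ _).
- exact: mulrn_wge0 (le_trans e_ge0 e_sum).
- exact: sorted_values_sorted.
- by rewrite size_sorted_values card_ord -n_eq.
Qed.

Local Close Scope ring_scope.

Theorem lemma3p6 (R : realFieldType) (n k : nat) (J : {set {set 'I_n}}) :
  k %| n ->
  k_system k J ->
  min_degree_cond k J ->
  exists w : {set 'I_n} -> R, fractional_perfect_matching (layer k J) w.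
Proof.
move=> k_dvd_n [J0 _] J_deg.
pose a (e : {set 'I_n}) (v : 'I_n) : R := (((e \in layer k J) && (v \in e))%:R)%R.
have dot_incidence y e :
  dot y (a e) = (\sum_(v | (e \in layer k J) && (v \in e)) y v)%R.
  by rewrite /dot [RHS]big_mkcond; apply: eq_bigr => v _; rewrite mulr_natr mulrb.
have [[w w_ge0 wE]|[y [ya y1]]] := farkas a (fun _ => 1%R).
  exists w; split => [e _|v]; first exact: w_ge0.
  rewrite (wE v) [LHS]big_mkcond /=; apply: eq_bigr => e _.
  by rewrite mulr_natr mulrb.
suff : (0 <= dot y (fun _ => 1))%R by rewrite leNgt y1.
rewrite /dot; under eq_bigr do rewrite mulr1.
apply: sum_ge0_of_edge_sums_ge0 k_dvd_n J0 J_deg _ => e eH.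
by have := ya e; rewrite dot_incidence eH.
Qed.
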